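(* Let $d\in\mathbb{N}$ and $k\in\mathbb{N}$. Suppose that $f\in\mathcal{G}_d$ is log-$k$-affine and that $\operatorname{supp} f\in\mathcal{P}$. Then there exist $\kappa(f)\leq k$, vectors $\alpha_1,\dotsc,\alpha_{\kappa(f)}\in\mathbb{R}^d$, scalars $\beta_1,\dotsc,\beta_{\kappa(f)}\in\mathbb{R}$ and a polyhedral subdivision $E_1,\dotsc,E_{\kappa(f)}$ of $\operatorname{supp} f$ such that $f(x)=\exp(\alpha_j^\top x+\beta_j)$ for all $x\in E_j$ and all $j$, and $\alpha_i\neq\alpha_j$ whenever $i\neq j$. Moreover, the triples $(\alpha_j,\beta_j,E_j)_{j=1}^{\kappa(f)}$ are unique up to reordering. In addition, if $\operatorname{supp} f\in\mathcal{P}^m$ for some $m\in\mathbb{N}\cup\{0\}$, then $E_j\in\mathcal{P}^{k+m-1}$ for all $j$.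
   Context: $\mathcal{G}_d$ is the set of functions $e^{\phi}$ where $\phi:\mathbb{R}^d\to[-\infty,\infty)$ is upper semi-continuous and concave. For $f:\mathbb{R}^d\to\mathbb{R}$, $\operatorname{supp} f:=\{x: f(x)\neq 0\}$. A function $f\in\mathcal{G}_d$ is log-$k$-affine if there exist closed sets $E_1,\dotsc,E_k$ with $\operatorname{supp} f=\bigcup_{j=1}^k E_j$ and $\log f$ affine on each $E_j$. A polyhedral set is an intersection of finitely many closed half-spaces; $\mathbb{R}^d$ itself is regarded as a polyhedral set with 0 facets. A facet of a convex set $E$ is a set $E\cap H$ of affine dimension $\dim(E)-1$, where $H$ is an affine hyperplane supporting $E$. $\mathcal{P}$ denotes the collection of polyhedral subsets of $\mathbb{R}^d$ with non-empty interior, and $\mathcal{P}^m$ those elements of $\mathcal{P}$ with at most $m$ facets. A (polyhedral) subdivision of $P\in\mathcal{P}$ is a finite collection $E_1,\dotsc,E_\ell\in\mathcal{P}$ with $P=\bigcup_j E_j$ and such that $E_i\cap E_j$ is a common face of $E_i$ and $E_j$ for all $i,j$. *)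

From HB Require Import structures.
From mathcomp Require Import all_boot all_order all_algebra.
From mathcomp Require Import all_classical all_reals all_analysis.
Set Implicit Arguments. Unset Strict Implicit. Unset Printing Implicit Defensive.
Import Order.TTheory GRing.Theory Num.Theory.
Import numFieldNormedType.Exports.
Local Open Scope classical_set_scope.
Local Open Scope ring_scope.

Section Defs.
Variables (R : realType) (d : nat).
Notation V := 'rV[R]_d.

Definition dot (a x : V) : R := \sum_(i < d) a 0 i * x 0 i.

Definition concave_ext (phi : V -> \bar R) : Prop :=
  forall (x y : V) (l : R), 0 < l < 1 ->
    (l%:E * phi x + (1 - l)%:E * phi y <= phi (l *: x + (1 - l) *: y)%R)%E.

Definition usc_ext (phi : V -> \bar R) : Prop :=
  forall (x : V) (t : R), (phi x < t%:E)%E -> \forall y \near x, (phi y < t%:E)%E.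

Definition in_G (f : V -> R) : Prop :=
  exists phi : V -> \bar R,
    (forall x, phi x != +oo%E) /\ usc_ext phi /\ concave_ext phi /\
    (forall x, (f x)%:E = expeR (phi x)).

Definition supp (f : V -> R) : set V := [set x | f x != 0].

Definition log_k_affine (k : nat) (f : V -> R) : Prop :=
  exists E : 'I_k -> set V,
    (forall j, closed (E j)) /\ supp f = \bigcup_(j in setT) E j /\
    (forall j, exists (a : V) (b : R), forall x, E j x -> ln (f x) = dot a x + b).

Definition polyhedral (E : set V) : Prop :=
  exists (n : nat) (A : 'I_n -> V) (b : 'I_n -> R),
    (forall i, A i != 0) /\ E = [set x | forall i, dot (A i) x <= b i].

Definition aff_indep (n : nat) (p : 'I_n.+1 -> V) : Prop :=
  forall c : 'I_n -> R,
    \sum_(i < n) c i *: (p (lift ord0 i) - p ord0) = 0 -> forall i, c i = 0.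

Definition has_aff_indep (S : set V) (n : nat) : Prop :=
  exists p : 'I_n.+1 -> V, (forall i, S (p i)) /\ aff_indep p.

Definition affdim_is (S : set V) (n : nat) : Prop :=
  has_aff_indep S n /\ ~ has_aff_indep S n.+1.

Definition is_facet (E F : set V) : Prop :=
  exists (a : V) (b : R), a != 0 /\ (forall x, E x -> dot a x <= b) /\
    F = E `&` [set x | dot a x = b] /\
    exists n, affdim_is E n.+1 /\ affdim_is F n.

(* faces of a polyhedron (including E itself and the empty set) *)
Definition is_face (E F : set V) : Prop :=
  exists (a : V) (b : R), (forall x, E x -> dot a x <= b) /\
    F = E `&` [set x | dot a x = b].

Definition in_P (E : set V) : Prop := polyhedral E /\ interior E !=set0.

Definition in_Pm (m : nat) (E : set V) : Prop :=
  in_P E /\ exists Fs : 'I_m -> set V, forall F, is_facet E F -> exists i, F = Fs i.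

Definition subdivision (P : set V) (l : nat) (E : 'I_l -> set V) : Prop :=
  (forall j, in_P (E j)) /\ P = \bigcup_(j in setT) E j /\
  (forall i j, is_face (E i) (E i `&` E j) /\ is_face (E j) (E i `&` E j)).

Definition affine_rep (f : V -> R) (l : nat) (alpha : 'I_l -> V) (beta : 'I_l -> R)
    (E : 'I_l -> set V) : Prop :=
  subdivision (supp f) E /\
  (forall j x, E j x -> f x = expR (dot (alpha j) x + beta j)) /\
  (forall i j, i != j -> alpha i != alpha j).

End Defs.

From Pilot Require Import Defs.
From HB Require Import structures.
From mathcomp Require Import all_boot all_order all_algebra.
From mathcomp Require Import all_classical all_reals all_analysis.
From mathcomp Require Import lra zify.
Import Order.TTheory GRing.Theory Num.Theory.
Import numFieldNormedType.Exports.
Local Open Scope classical_set_scope.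
Local Open Scope ring_scope.
Set Implicit Arguments. Unset Strict Implicit. Unset Printing Implicit Defensive.

(* By concavity, an affine function that agrees with ln f on an
   open set majorizes ln f on supp f; call the pieces of the log-k-affine cover that
   do so on some open set tangents.  Conversely ln f is the minimum of the tangents:
   if ln f (x) were strictly below all of them, upper semicontinuity and convexity
   of supp f would give an open subset of supp f where this persists, and by Baire
   one closed piece of the cover would have interior there, i.e. would be a tangent.
   Tangents with equal slopes coincide, so after removing duplicates the cells
   E_i = {ln f = l_i} are polyhedra with interior meeting along common faces.  Any
   other representation has the same affine functions (Baire again, on the interior
   of each cell) and the same pieces, because a polyhedron with interior is the
   closure of its interior.  A facet of E_i lies in a facet of supp f or in one of
   the kap - 1 hyperplanes {l_i = l_j}. *)

Section DotProduct.
Variables (R : realType) (d : nat).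
Notation V := 'rV[R]_d.
Notation dot := (@dot R d).

Lemma dotDr (a x y : V) : dot a (x + y) = dot a x + dot a y.
Proof. by rewrite /Defs.dot -big_split /=; apply: eq_bigr => i _; rewrite mxE mulrDr. Qed.

Lemma dotZr (a x : V) (c : R) : dot a (c *: x) = c * dot a x.
Proof. by rewrite /Defs.dot mulr_sumr; apply: eq_bigr => i _; rewrite mxE mulrCA. Qed.

Lemma dotNr (a x : V) : dot a (- x) = - dot a x.
Proof. by rewrite -scaleN1r dotZr mulN1r. Qed.

Lemma dotBr (a x y : V) : dot a (x - y) = dot a x - dot a y.
Proof. by rewrite dotDr dotNr. Qed.

Lemma dotDl (a b x : V) : dot (a + b) x = dot a x + dot b x.
Proof. by rewrite /Defs.dot -big_split /=; apply: eq_bigr => i _; rewrite mxE mulrDl. Qed.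

Lemma dotZl (a x : V) (c : R) : dot (c *: a) x = c * dot a x.
Proof. by rewrite /Defs.dot mulr_sumr; apply: eq_bigr => i _; rewrite mxE mulrA. Qed.

Lemma dotNl (a x : V) : dot (- a) x = - dot a x.
Proof. by rewrite -scaleN1r dotZl mulN1r. Qed.

Lemma dotBl (a b x : V) : dot (a - b) x = dot a x - dot b x.
Proof. by rewrite dotDl dotNl. Qed.

Lemma dot_sumr (a : V) n (w : 'I_n -> R) (x : 'I_n -> V) :
  dot a (\sum_(i < n) w i *: x i) = \sum_(i < n) w i * dot a (x i).
Proof.
elim: n w x => [|n IH] w x; last by rewrite !big_ord_recr /= dotDr IH dotZr.
by rewrite !big_ord0 /Defs.dot big1 // => i _; rewrite mxE mulr0.
Qed.

Lemma dot_delta (a : V) (i : 'I_d) : dot a (delta_mx 0 i) = a 0 i.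
Proof.
rewrite /Defs.dot (bigD1 i) //= big1 ?addr0; first by rewrite mxE !eqxx mulr1.
by move=> j ji; rewrite mxE eqxx (negbTE ji) mulr0.
Qed.

Lemma dot_mulmx (a x : V) : dot a x = (x *m a^T) 0 0.
Proof. by rewrite mxE /Defs.dot; apply: eq_bigr => i _; rewrite mxE mulrC. Qed.

Lemma dot_self_gt0 (a : V) : a != 0 -> 0 < dot a a.
Proof.
move=> a0; rewrite lt_def sumr_ge0 ?andbT => [|i _]; last by rewrite -expr2 sqr_ge0.
apply: contra a0 => /eqP /psumr_eq0P aa0; apply/eqP/rowP => i.
have /eqP := aa0 (fun j _ => sqr_ge0 (a 0 j)) i isT.
by rewrite -expr2 sqrf_eq0 mxE => /eqP.
Qed.

Lemma continuous_dot (a : V) : continuous (dot a).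
Proof.
apply: (@continuous_big R _ +%R 0 predT add_continuous V) => i _ x.
apply: (@continuousM R V (fun _ => a 0 i) (fun y : V => y 0 i)); first exact: cst_continuous.
exact: coord_continuous.
Qed.

Lemma dot_lt_near (a z : V) (c : R) : dot a z < c -> \forall x \near z, dot a x < c.
Proof.
move=> az; have : nbhs (dot a z) [set y : R | y < c].
  by apply: open_nbhs_nbhs; split=> //; exact: open_lt.
exact: continuous_dot.
Qed.

Lemma closed_dot_le (a : V) (c : R) : closed [set x | dot a x <= c].
Proof. exact: (continuous_closedP (dot a)).1 (@continuous_dot a) _ (@closed_le R c). Qed.

End DotProduct.

Lemma finite_closed_cover_interior (T : topologicalType) (I : finType) (F : I -> set T)
    (W : set T) :
  (forall i, closed (F i)) -> open W -> W !=set0 -> W `<=` \bigcup_i F i ->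
  exists i, (W `&` F i)° !=set0.
Proof.
move=> Fcl Wo W0 WF.
suff /(_ (enum I) W Wo W0) : forall (s : seq I) (W : set T), open W -> W !=set0 ->
    W `<=` \bigcup_(i in [set i | i \in s]) F i -> exists i, (W `&` F i)° !=set0.
  by apply=> x /WF [i _ Fix]; exists i; rewrite /= ?mem_enum.
move=> {W Wo W0 WF}; elim=> [|i s IH] W Wo [w Ww] WF; first by have [] := WF w Ww.
have [[y [Wy nFiy]]|WFi] := pselect (exists y, W y /\ ~ F i y); last first.
  exists i, w; apply: filterS (open_nbhs_nbhs (conj Wo Ww)) => z Wz; split => //.
  by apply: contrapT => nFiz; apply: WFi; exists z.
have [|||j [z Hz]] := IH (W `&` ~` F i).
- by apply: openI => //; exact: closed_openC.
- by exists y.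
- move=> x [Wx nFix]; have [j /= + Fjx] := WF x Wx.
  by rewrite inE => /orP[/eqP ji|sj]; [move: nFix; rewrite -ji | exists j].
by exists j, z; apply: filterS Hz => x [[]].
Qed.

Lemma near0_in_01 (R : realFieldType) (P : R -> Prop) :
  (\forall t \near 0, P t) -> exists t, 0 < t < 1 /\ P t.
Proof.
move=> /nbhs_ballP [e /= e0 He]; exists (Num.min (e / 2) (1 / 2)); split.
  rewrite lt_min gt_min; apply/andP; split; first by apply/andP; split; lra.
  by apply/orP; right; lra.
apply: He; rewrite /ball /= sub0r normrN ger0_norm.
  by rewrite gt_min; apply/orP; left; lra.
by rewrite le_min; apply/andP; split; lra.
Qed.

Section Convexity.
Variables (R : realType) (V : normedModType R).

Lemma nbhs_line (x v : V) (U : set V) : nbhs x U -> \forall t \near 0, U (x + t *: v).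
Proof.
move=> xU; have : (fun t : R => x + t *: v) @ 0 --> x + 0 *: v.
  by apply: cvgD; [exact: cvg_cst | apply: cvgZr_tmp; exact: cvg_id].
by rewrite scale0r addr0; apply.
Qed.

Definition is_convex (P : set V) :=
  forall x y (t : R), P x -> P y -> 0 <= t <= 1 -> P ((1 - t) *: x + t *: y).

Lemma convex_nbhs_segment (P : set V) (x0 x : V) (t : R) :
  is_convex P -> nbhs x0 P -> P x -> 0 < t <= 1 -> nbhs ((1 - t) *: x + t *: x0) P.
Proof.
move=> cP x0P Px /andP[t0 t1].
pose g w := t^-1 *: (w - (1 - t) *: x).
have gx0 : g ((1 - t) *: x + t *: x0) = x0.
  by rewrite /g [(1 - t) *: x + _]addrC addrK scalerA mulVf ?scale1r ?gt_eqF.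
have : g @ nbhs ((1 - t) *: x + t *: x0) --> g ((1 - t) *: x + t *: x0).
  by apply: cvgZl_tmp; apply: cvgB; [exact: cvg_id | exact: cvg_cst].
rewrite gx0 => gcvg.
have : nbhs ((1 - t) *: x + t *: x0) (g @^-1` P) by exact: gcvg.
apply: filterS => w /= Pgw.
have -> : w = (1 - t) *: x + t *: g w by rewrite /g scalerA mulfV ?gt_eqF // scale1r addrC subrK.
by apply: cP => //; lra.
Qed.

(* Every point of [P] is approached along the segment towards an interior point. *)
Lemma convex_sub_closure_interior (P : set V) :
  is_convex P -> P° !=set0 -> P `<=` closure P°.
Proof.
move=> cP [x0 x0P] x Px B xB.
have [t [/andP[t0 t1] Bt]] := near0_in_01 (nbhs_line (x0 - x) xB).
exists (x + t *: (x0 - x)); split => //.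
have -> : x + t *: (x0 - x) = (1 - t) *: x + t *: x0.
  by rewrite scalerBr scalerBl scale1r addrA addrAC.
by apply: convex_nbhs_segment => //; lra.
Qed.

End Convexity.

Section AffineFunctions.
Variables (R : realType) (d : nat).
Notation V := 'rV[R]_d.
Notation dot := (@dot R d).

Lemma affine_eq_near (x0 a a' : V) (b b' : R) :
  (\forall y \near x0, dot a y + b = dot a' y + b') -> a = a' /\ b = b'.
Proof.
move=> ab; have ab0 := nbhs_singleton ab; have aa' : a = a'.
  apply/rowP => i.
  have [t [/andP[t0 _]]] := near0_in_01 (nbhs_line (delta_mx 0 i) ab).
  rewrite !dotDr !dotZr !dot_delta => abt.
  by apply: (mulfI (lt0r_neq0 t0)); lra.
by split => //; move: ab0; rewrite aa'; lra.
Qed.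

Lemma affine_cover_match (g : V -> R) m (E : 'I_m -> set V) (a : 'I_m -> V) (b : 'I_m -> R)
    (W : set V) (a1 : V) (b1 : R) :
  (forall l, closed (E l)) -> (forall l x, E l x -> g x = dot (a l) x + b l) ->
  open W -> W !=set0 -> W `<=` \bigcup_l E l -> (forall x, W x -> g x = dot a1 x + b1) ->
  exists l, [/\ a l = a1, b l = b1 & W `&` E l !=set0].
Proof.
move=> Ecl Eg Wo W0 WE Wg.
have [l [y yWE]] := finite_closed_cover_interior Ecl Wo W0 WE.
have [] : a l = a1 /\ b l = b1.
  by apply: (@affine_eq_near y); apply: filterS yWE => x [/Wg <- /Eg <-].
by exists l; split => //; exists y; exact: nbhs_singleton yWE.
Qed.

End AffineFunctions.

Section Polyhedra.
Variables (R : realType) (d : nat).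
Notation V := 'rV[R]_d.
Notation dot := (@dot R d).

Definition polyhedron n (A : 'I_n -> V) (c : 'I_n -> R) : set V :=
  [set x | forall i, dot (A i) x <= c i].

Lemma polyhedron_convex n (A : 'I_n -> V) c : is_convex (polyhedron A c).
Proof.
move=> x y t Px Py /andP[t0 t1] i; rewrite dotDr !dotZr.
have := Px i; have := Py i => yi xi.
have : (1 - t) * dot (A i) x <= (1 - t) * c i by apply: ler_wpM2l; lra.
have : t * dot (A i) y <= t * c i by apply: ler_wpM2l.
lra.
Qed.

Lemma polyhedron_closed n (A : 'I_n -> V) c : closed (polyhedron A c).
Proof.
have -> : polyhedron A c = \bigcap_(i in setT) [set x | dot (A i) x <= c i].
  by apply/seteqP; split=> x Px i; [move=> _; exact: Px | exact: Px].
by apply: closed_bigI => i _; exact: closed_dot_le.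
Qed.

Lemma polyhedron_nbhs n (A : 'I_n -> V) c z :
  (forall i, dot (A i) z < c i) -> nbhs z (polyhedron A c).
Proof.
move=> zA; apply: (@filter_forall V _ (fun i x => dot (A i) x <= c i) (nbhs z)) => i.
by apply: filterS (dot_lt_near (zA i)) => x; exact: ltW.
Qed.

Lemma supporting_hyperplane_interior (P : set V) (a z : V) (b : R) :
  a != 0 -> (forall x, P x -> dot a x <= b) -> nbhs z P -> dot a z < b.
Proof.
move=> a0 Pab zP; have [t [/andP[t0 _] Pzt]] := near0_in_01 (nbhs_line a zP).
have := Pab _ Pzt; rewrite dotDr dotZr; have := mulr_gt0 t0 (dot_self_gt0 a0); lra.
Qed.

End Polyhedra.

Section AffineDimension.
Variables (R : realType) (d : nat).
Notation V := 'rV[R]_d.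
Notation dot := (@dot R d).

Lemma mulmx_tr_dot0 (a x : V) : dot a x = 0 -> x *m a^T = 0.
Proof. by move=> ax0; apply/rowP => j; rewrite ord1 -dot_mulmx ax0 mxE. Qed.

(* The difference vectors of [p] are independent rows orthogonal to the rows of [N]. *)
Lemma aff_indep_rank n m (p : 'I_n.+1 -> V) (N : 'M[R]_(m, d)) :
  aff_indep p -> (forall i, (p (lift ord0 i) - p ord0) *m N^T = 0) ->
  (n + \rank N <= d)%N.
Proof.
move=> p_indep pN.
pose M : 'M[R]_(n, d) := \matrix_(i, j) (p (lift ord0 i) - p ord0) 0 j.
have rowM i : row i M = p (lift ord0 i) - p ord0 by apply/rowP => j; rewrite !mxE.
have M_free : row_free M.
  apply: inj_row_free => v vM; apply/rowP => i; rewrite mxE.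
  apply: p_indep i; rewrite -[RHS]vM mulmx_sum_row; apply: eq_bigr => l _.
  by rewrite rowM.
have MN : M *m N^T = 0 by apply/row_matrixP => i; rewrite row_mul rowM pN row0.
have := mxrankS (introT sub_kermxP MN); rewrite mxrank_ker mxrank_tr.
by move/eqP: M_free => ->; have := rank_leq_col N; lia.
Qed.

Lemma aff_indep_le_dim n (p : 'I_n.+1 -> V) : aff_indep p -> (n <= d)%N.
Proof.
move=> p_indep; have := @aff_indep_rank n 0 p 0 p_indep.
by rewrite mxrank0 addn0; apply=> i; apply/matrixP => ? [].
Qed.

Lemma aff_indep_hyperplane n (p : 'I_n.+1 -> V) (a : V) (b : R) :
  aff_indep p -> a != 0 -> (forall i, dot a (p i) = b) -> (n < d)%N.
Proof.
move=> p_indep a0 pa; have := @aff_indep_rank n 1 p a p_indep.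
rewrite rank_rV a0 addn1; apply=> i.
by apply: mulmx_tr_dot0; rewrite dotBr !pa subrr.
Qed.

Lemma aff_indep_hyperplane_unique n (p : 'I_n.+1 -> V) (a a' : V) (b b' : R) :
  aff_indep p -> n.+1 = d -> a' != 0 ->
  (forall i, dot a (p i) = b) -> (forall i, dot a' (p i) = b') ->
  exists l : R, a = l *: a' /\ b = l * b'.
Proof.
move=> p_indep nd a'0 pa pa'.
have rk : (\rank (col_mx a a') <= 1)%N.
  have pN i : (p (lift ord0 i) - p ord0) *m (col_mx a a')^T = 0.
    by rewrite tr_col_mx mul_mx_row !mulmx_tr_dot0 ?row_mx0 // dotBr ?pa ?pa' subrr.
  by have := aff_indep_rank p_indep pN; lia.
have a'_sub : (a' <= col_mx a a')%MS by rewrite -addsmxE addsmxSr.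
have /eqmxP a'E : (a' == col_mx a a')%MS.
  by rewrite -(mxrank_leqif_eq a'_sub).2 eqn_leq mxrankS // rank_rV a'0.
have /submxP[D aD] : (a <= a')%MS by rewrite a'E -addsmxE addsmxSl.
have {}aD : a = D 0 0 *: a' by rewrite aD [D in D *m _]mx11_scalar mul_scalar_mx.
by exists (D 0 0); rewrite -(pa ord0) -(pa' ord0) aD dotZl.
Qed.

Lemma has_aff_indep_pred (S : set V) n : has_aff_indep S n.+1 -> has_aff_indep S n.
Proof.
move=> [p [Sp p_indep]].
exists (fun i => p (widen_ord (leqnSn _) i)); split => // c pc i.
pose c' j := if unlift ord_max j is Some i then c i else 0.
have widenE (i0 : 'I_n) : widen_ord (leqnSn n) i0 = lift ord_max i0.
  by apply/val_inj; exact: (esym (lift_max i0)).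
have := p_indep c'; rewrite big_ord_recr /= /c' unlift_none scale0r addr0.
move=> /(_ _ (widen_ord (leqnSn n) i)); rewrite widenE liftK; apply.
rewrite -[RHS]pc; apply: eq_bigr => j _; rewrite widenE liftK.
by congr (_ *: (p _ - p _)); apply/val_inj => //; rewrite -widenE.
Qed.

Lemma has_aff_indep_le (S : set V) n m :
  has_aff_indep S m -> (n <= m)%N -> has_aff_indep S n.
Proof.
move=> + nm; rewrite -(subnK nm); elim: (m - n)%N => [|k IH]; first by rewrite add0n.
by rewrite addSn => /has_aff_indep_pred.
Qed.

Lemma has_aff_indep_sub (S T : set V) n : S `<=` T -> has_aff_indep S n -> has_aff_indep T n.
Proof. by move=> ST [p [Sp p_indep]]; exists p; split => // j; apply: ST. Qed.

Lemma has_aff_indep_interior (S : set V) (x0 : V) : nbhs x0 S -> has_aff_indep S d.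
Proof.
move=> x0S.
have : \forall t \near 0, forall i : 'I_d, S (x0 + t *: delta_mx 0 i).
  apply: (@filter_forall R _ (fun i t => S (x0 + t *: delta_mx 0 i)) (nbhs 0)) => i.
  exact: nbhs_line.
move=> /near0_in_01 [t [/andP[t0 _] St]].
exists (fun j => if unlift ord0 j is Some i then x0 + t *: delta_mx 0 i else x0).
split=> [j|c]; first by case: (unlift ord0 j) => [i|]; [apply: St | apply: nbhs_singleton].
rewrite unlift_none; under eq_bigr => j _ do rewrite liftK addrAC subrr add0r scalerA.
move=> /rowP c0 i; have := c0 i; rewrite mxE summxE (bigD1 i) //= big1.
  by rewrite !mxE !eqxx mulr1 addr0 => /eqP; rewrite mulf_eq0 (gt_eqF t0) orbF => /eqP.
by move=> j ji; rewrite !mxE eqxx eq_sym (negbTE ji) mulr0.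
Qed.

Lemma affdim_interior (S : set V) (x0 : V) : nbhs x0 S -> affdim_is S d.
Proof.
move=> x0S; split; first exact: has_aff_indep_interior x0S.
by move=> [p [_ /aff_indep_le_dim]]; rewrite ltnn.
Qed.

Lemma affdim_is_unique (S : set V) n m : affdim_is S n -> affdim_is S m -> n = m.
Proof.
have le (k l : nat) : affdim_is S k -> affdim_is S l -> (k <= l)%N.
  move=> [Sk _] [_ nSl]; rewrite leqNgt; apply/negP => lk.
  by apply: nSl; exact: has_aff_indep_le Sk lk.
by move=> Sn Sm; apply/eqP; rewrite eqn_leq !(le _ _ Sn Sm, le _ _ Sm Sn).
Qed.

End AffineDimension.

Lemma mean_const (R : realFieldType) n (C : R) : \sum_(s < n.+1) n.+1%:R^-1 * C = C.
Proof. by rewrite -mulr_sumr sumr_const card_ord -[C *+ _]mulr_natr mulrCA mulVf ?mulr1. Qed.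

Lemma mean_lt (R : realFieldType) n (y : 'I_n.+1 -> R) (C : R) s0 :
  (forall s, y s <= C) -> y s0 < C -> \sum_(s < n.+1) n.+1%:R^-1 * y s < C.
Proof.
move=> yC ys0; have w0 : 0 < n.+1%:R^-1 :> R by rewrite invr_gt0 ltr0n.
rewrite -[X in _ < X](mean_const n C) (bigD1 s0) //= [X in _ < X](bigD1 s0) //=.
by rewrite ltr_leD ?ltr_pM2l // ler_sum // => s _; rewrite ler_pM2l.
Qed.

Section Facets.
Variables (R : realType) (d : nat).
Notation V := 'rV[R]_d.
Notation dot := (@dot R d).

(* Otherwise the mean of points of the face, each strict for one constraint,
   would be an interior point of the polyhedron lying on the supporting hyperplane. *)
Lemma face_sub_constraint n (A : 'I_n -> V) c (a x0 : V) (b : R) :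
  a != 0 -> (forall x, polyhedron A c x -> dot a x <= b) ->
  polyhedron A c x0 -> dot a x0 = b ->
  exists r, forall x, polyhedron A c x -> dot a x = b -> dot (A r) x = c r.
Proof.
move=> a0 Pab Px0 ax0; apply: contrapT => noconstraint.
have /choice [q qr] : forall r, exists q,
    [/\ polyhedron A c q, dot a q = b & dot (A r) q < c r].
  move=> r; apply: contrapT => nq; apply: noconstraint; exists r => x Px ax.
  have := Px r; rewrite le_eqVlt => /orP[/eqP //|xr].
  by exfalso; apply: nq; exists x.
pose Q s := if unlift ord0 s is Some r then q r else x0.
have PQ s : polyhedron A c (Q s) /\ dot a (Q s) = b.
  by rewrite /Q; case: (unlift ord0 s) => [r|//]; have [] := qr r.
pose z := \sum_(s < n.+1) n.+1%:R^-1 *: Q s.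
have : nbhs z (polyhedron A c).
  apply: polyhedron_nbhs => r; rewrite /z dot_sumr.
  apply: (@mean_lt _ _ _ _ (lift ord0 r)) => [s|]; first exact: (PQ s).1.
  by rewrite /Q liftK; have [] := qr r.
move=> /(supporting_hyperplane_interior a0 Pab); rewrite /z dot_sumr.
have -> : \sum_(s < n.+1) n.+1%:R^-1 * dot a (Q s) = b.
  by rewrite -[RHS](mean_const n b); apply: eq_bigr => s _; rewrite (PQ s).2.
by rewrite ltxx.
Qed.

Lemma polyhedron_facet n (A : 'I_n -> V) c (F : set V) :
  (forall r, A r != 0) -> (polyhedron A c)° !=set0 -> is_facet (polyhedron A c) F ->
  exists r, F = polyhedron A c `&` [set x | dot (A r) x = c r] /\
    (0 < d)%N /\ has_aff_indep F d.-1.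
Proof.
move=> A0 [x0 x0P] [a [b [a0 [Pab [FE [n' [Pdim [Fdim _]]]]]]]].
have dE : n'.+1 = d := affdim_is_unique Pdim (affdim_interior x0P).
have [p [Fp p_indep]] := Fdim.
have pP i : polyhedron A c (p i) /\ dot a (p i) = b by move: (Fp i); rewrite FE.
have [r Fr] := face_sub_constraint a0 Pab (pP ord0).1 (pP ord0).2.
have [l [al bl]] := aff_indep_hyperplane_unique p_indep dE (A0 r)
  (fun i => (pP i).2) (fun i => Fr _ (pP i).1 (pP i).2).
have l0 : l != 0 by apply: contraNneq a0 => l0; rewrite al l0 scale0r.
exists r; split; last by split; [rewrite -dE | have -> : d.-1 = n' by rewrite -dE].
rewrite FE al bl; apply/seteqP; split => x [Px] /=; rewrite dotZl => ?; split => //.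
  exact: (mulfI l0).
by congr (_ * _).
Qed.

Lemma polyhedron_constraint_facet n (A : 'I_n -> V) c (s : 'I_n) :
  A s != 0 -> (polyhedron A c)° !=set0 -> (0 < d)%N ->
  has_aff_indep (polyhedron A c `&` [set x | dot (A s) x = c s]) d.-1 ->
  is_facet (polyhedron A c) (polyhedron A c `&` [set x | dot (A s) x = c s]).
Proof.
move=> As0 [x0 x0P] d0 Gdim; exists (A s), (c s); split => //.
split; first by move=> x; apply.
split => //; exists d.-1; rewrite prednK //; split; first exact: affdim_interior x0P.
split=> // -[p [Gp /aff_indep_hyperplane]].
by move=> /(_ _ _ As0 (fun i => (Gp i).2)); rewrite prednK // ltnn.
Qed.

Lemma in_Pm_le m m' (E : set V) : (m <= m')%N -> in_Pm m E -> in_Pm m' E.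
Proof.
move=> mm' [EP [Fs Fs_facets]]; split=> //.
exists (fun t : 'I_m' => if insub (val t) is Some s then Fs s else set0) => F /Fs_facets [s ->].
by exists (widen_ord mm' s); rewrite /= valK.
Qed.

End Facets.

Section LogConcave.
Variables (R : realType) (d : nat).
Notation V := 'rV[R]_d.
Notation dot := (@dot R d).
Variables (f : V -> R) (phi : V -> \bar R).
Hypothesis phi_noo : forall x, phi x != +oo%E.
Hypothesis phi_usc : usc_ext phi.
Hypothesis phi_concave : concave_ext phi.
Hypothesis f_expphi : forall x, (f x)%:E = expeR (phi x).

Lemma supp_gt0 x : supp f x -> 0 < f x.
Proof. by move=> fx; rewrite lt_def fx -lee_fin f_expphi expeR_ge0. Qed.

Lemma phi_supp x : supp f x -> phi x = (ln (f x))%:E.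
Proof.
move=> fx; have := f_expphi x; have := phi_noo x.
case: (phi x) => [r _ [->]| //|_ [f0]]; first by rewrite expRK.
by move: fx; rewrite /supp /= f0 eqxx.
Qed.

Lemma lnK_supp x : supp f x -> expR (ln (f x)) = f x.
Proof. by move=> /supp_gt0 fx; rewrite lnK // posrE. Qed.

Definition log_affine_near (a : V) (b : R) (x0 : V) :=
  \forall y \near x0, supp f y /\ ln (f y) = dot a y + b.

(* Concavity of [phi] along the segment from [x0] to [x]. *)
Lemma log_affine_near_majorant a b x0 x :
  log_affine_near a b x0 -> supp f x -> ln (f x) <= dot a x + b.
Proof.
move=> abx0 Sx.
have [t [/andP[t0 t1] [Sz abz]]] := near0_in_01 (nbhs_line (x - x0) abx0).
have [Sx0 abx0'] := nbhs_singleton abx0.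
have := phi_concave x x0 (l := t); rewrite t0 t1 => /(_ isT).
have -> : t *: x + (1 - t) *: x0 = x0 + t *: (x - x0).
  by rewrite scalerBr scalerBl scale1r addrCA addrA addrAC.
rewrite (phi_supp Sx) (phi_supp Sx0) (phi_supp Sz) -!EFinM -EFinD lee_fin abz abx0'.
rewrite dotDr dotZr dotBr => concave_t.
by rewrite -(ler_pM2l t0); lra.
Qed.

Lemma log_affine_near_intercept a b b' x0 x1 :
  log_affine_near a b x0 -> log_affine_near a b' x1 -> b = b'.
Proof.
move=> abx0 ab'x1; have [S0 e0] := nbhs_singleton abx0; have [S1 e1] := nbhs_singleton ab'x1.
have := log_affine_near_majorant ab'x1 S0; have := log_affine_near_majorant abx0 S1; lra.
Qed.

Variables (n : nat) (A : 'I_n -> V) (c : 'I_n -> R).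
Hypothesis A_neq0 : forall r, A r != 0.
Hypothesis suppE : supp f = polyhedron A c.
Hypothesis supp_interior : (supp f)° !=set0.
Variables (k : nat) (E0 : 'I_k -> set V) (a0 : 'I_k -> V) (b0 : 'I_k -> R).
Hypothesis E0_closed : forall j, closed (E0 j).
Hypothesis E0_cover : supp f = \bigcup_(j in setT) E0 j.
Hypothesis E0_affine : forall j x, E0 j x -> ln (f x) = dot (a0 j) x + b0 j.

Definition tangents : seq (V * R) :=
  undup [seq p <- [seq (a0 j, b0 j) | j <- enum 'I_k]
        | `[< exists x0, log_affine_near p.1 p.2 x0 >]].

Lemma tangentsP p : p \in tangents -> exists x0, log_affine_near p.1 p.2 x0.
Proof. by rewrite mem_undup mem_filter => /andP[/asboolP]. Qed.

Lemma piece_tangent j (x0 : V) : nbhs x0 (E0 j) -> (a0 j, b0 j) \in tangents.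
Proof.
move=> x0E; rewrite mem_undup mem_filter map_f ?mem_enum // andbT.
apply/asboolP; exists x0; apply: filterS x0E => y Ey; split; last exact: E0_affine.
by rewrite E0_cover; exists j.
Qed.

Lemma tangent_majorant p x : p \in tangents -> supp f x -> ln (f x) <= dot p.1 x + p.2.
Proof. by move=> /tangentsP [x0 px0] Sx; exact: log_affine_near_majorant px0 Sx. Qed.

Lemma tangent_slope_inj p q : p \in tangents -> q \in tangents -> p.1 = q.1 -> p = q.
Proof.
case: p q => [a b] [a' b'] /tangentsP [x0 /= px0] /tangentsP [x1 /= qx1] /= aa'.
by rewrite -aa' in qx1 *; rewrite (log_affine_near_intercept px0 qx1).
Qed.

Lemma below_tangents_near x : supp f x ->
  (forall j, (a0 j, b0 j) \in tangents -> ln (f x) < dot (a0 j) x + b0 j) ->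
  \forall y \near x, forall j, (a0 j, b0 j) \in tangents ->
    (phi y < (dot (a0 j) y + b0 j)%:E)%E.
Proof.
move=> Sx below.
apply: (@filter_forall V _ (fun j y => (a0 j, b0 j) \in tangents ->
  (phi y < (dot (a0 j) y + b0 j)%:E)%E) (nbhs x)) => j.
have [jt|jt] := boolP ((a0 j, b0 j) \in tangents); last by apply: nearW => y /negP.
pose del := dot (a0 j) x + b0 j - ln (f x).
have del0 : 0 < del by rewrite subr_gt0 below.
have phi_near : \forall y \near x, (phi y < (ln (f x) + del / 2)%:E)%E.
  by apply: phi_usc; rewrite (phi_supp Sx) lte_fin; lra.
have dot_near : \forall y \near x, dot (- a0 j) y < - (dot (a0 j) x - del / 2).
  by apply: dot_lt_near; rewrite dotNl; lra.
apply: filterS2 phi_near dot_near => y phiy doty _.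
by apply: (lt_trans phiy); rewrite lte_fin; move: doty; rewrite dotNl /del; lra.
Qed.

(* If [ln f x] were below every tangent, the same would hold on an open subset of
   [supp f], one of whose pieces [E0 j] has interior: a new tangent. *)
Lemma ln_f_tangent x : supp f x ->
  exists j, (a0 j, b0 j) \in tangents /\ ln (f x) = dot (a0 j) x + b0 j.
Proof.
move=> Sx; apply: contrapT => not_tangent.
have : forall j, (a0 j, b0 j) \in tangents -> ln (f x) < dot (a0 j) x + b0 j.
  move=> j jt; have := tangent_majorant jt Sx; rewrite le_eqVlt => /orP[/eqP e|//].
  by exfalso; apply: not_tangent; exists j.
pose B := [set y | forall j, (a0 j, b0 j) \in tangents ->
  (phi y < (dot (a0 j) y + b0 j)%:E)%E].
move=> below; have xB : nbhs x B° by exact/nbhs_interior/(below_tangents_near Sx below).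
have supp_convex : is_convex (supp f) by rewrite suppE; exact: polyhedron_convex.
have [z [Sz Bz]] := convex_sub_closure_interior supp_convex supp_interior Sx xB.
have [|||j [y yW]] := @finite_closed_cover_interior _ _ E0 (B `&` supp f)° E0_closed.
- exact: open_interior.
- by exists z; rewrite interiorI.
- by move=> w /interior_subset [_]; rewrite E0_cover.
have [/interior_subset [By Sy] E0y] := nbhs_singleton yW.
have yE0 : nbhs y (E0 j) by apply: filterS yW => w [].
have := By j (piece_tangent yE0).
by rewrite (phi_supp Sy) (E0_affine E0y) lte_fin ltxx.
Qed.

Definition kap := size tangents.
Definition alpha (i : 'I_kap) : V := (nth (0, 0) tangents i).1.
Definition beta (i : 'I_kap) : R := (nth (0, 0) tangents i).2.
Definition cell (i : 'I_kap) : set V :=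
  [set x | supp f x /\ ln (f x) = dot (alpha i) x + beta i].

Lemma kap_le : (kap <= k)%N.
Proof.
rewrite (leq_trans (size_undup _)) // size_filter (leq_trans (count_size _ _)) //.
by rewrite size_map size_enum_ord.
Qed.

Lemma tangent_nth (i : 'I_kap) : nth (0, 0) tangents i \in tangents.
Proof. exact: mem_nth. Qed.

Lemma alpha_inj : injective alpha.
Proof.
move=> i i' /(tangent_slope_inj (tangent_nth i) (tangent_nth i')) /eqP.
by rewrite nth_uniq ?undup_uniq // => /eqP /val_inj.
Qed.

Lemma cell_majorant i x : supp f x -> ln (f x) <= dot (alpha i) x + beta i.
Proof. exact: tangent_majorant (tangent_nth i). Qed.

Lemma exists_cell x : supp f x -> exists i, cell i x.
Proof.
move=> Sx; have [j [jt fx]] := ln_f_tangent Sx.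
have ikap : (index (a0 j, b0 j) tangents < kap)%N by rewrite index_mem.
by exists (Ordinal ikap); split; rewrite // /alpha /beta /= nth_index.
Qed.

Lemma cellE i : cell i = [set x | supp f x /\
  forall l, dot (alpha i) x + beta i <= dot (alpha l) x + beta l].
Proof.
apply/seteqP; split=> x [Sx xi]; split=> //.
  by move=> l; rewrite -xi cell_majorant.
have [l [_ xl]] := exists_cell Sx.
by apply/eqP; rewrite eq_le cell_majorant //= xl xi.
Qed.

Lemma cell_supp i : cell i `<=` supp f.
Proof. by move=> x []. Qed.

Lemma supp_cover_cells : supp f = \bigcup_(i in setT) cell i.
Proof.
apply/seteqP; split => x; first by move=> /exists_cell [i]; exists i.
by move=> [i _ []].
Qed.

Lemma cell_interior i : (cell i)° !=set0.
Proof.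
have [x0 ix0] := tangentsP (tangent_nth i); exists x0.
exact: filterS ix0.
Qed.

Definition cell_A (i : 'I_kap) (r : 'I_(n + kap.-1)) : V :=
  match fintype.split r with inl s => A s | inr j => alpha i - alpha (lift i j) end.
Definition cell_c (i : 'I_kap) (r : 'I_(n + kap.-1)) : R :=
  match fintype.split r with inl s => c s | inr j => beta (lift i j) - beta i end.

Lemma cell_A_neq0 i r : cell_A i r != 0.
Proof.
rewrite /cell_A; case: (fintype.split r) => [s|j]; first exact: A_neq0.
by rewrite subr_eq0; apply: contra (neq_lift i j) => /eqP /alpha_inj/eqP.
Qed.

Lemma cell_polyhedron i : cell i = polyhedron (cell_A i) (cell_c i).
Proof.
rewrite cellE; apply/seteqP; split => x.
  move=> [Sx xi] r; rewrite /cell_A /cell_c; case: (fintype.split r) => [s|j].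
    by move: Sx; rewrite suppE; apply.
  by have := xi (lift i j); rewrite dotBl; lra.
move=> xP; split.
  by rewrite suppE => s; have := xP (unsplit (inl s)); rewrite /cell_A /cell_c unsplitK.
move=> l; have [<-|il] := eqVneq i l; first exact: lexx.
have [j -> _] := unlift_some il.
by have := xP (unsplit (inr j)); rewrite /cell_A /cell_c unsplitK dotBl; lra.
Qed.

Lemma cell_closed i : closed (cell i).
Proof. by rewrite cell_polyhedron; exact: polyhedron_closed. Qed.

Lemma cell_convex i : is_convex (cell i).
Proof. by rewrite cell_polyhedron; exact: polyhedron_convex. Qed.

Lemma cell_face i j : is_face (cell i) (cell i `&` cell j).
Proof.
exists (alpha i - alpha j), (beta j - beta i); split.
  by move=> x [Sx xi]; have := cell_majorant j Sx; rewrite dotBl; lra.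
apply/seteqP; split=> x [[Sx xi]] /=.
  by move=> [_ xj]; split=> //; rewrite dotBl; lra.
by rewrite dotBl => ij; split => //; split => //; lra.
Qed.

Lemma cell_in_P i : in_P (cell i).
Proof.
split; last exact: cell_interior.
exists (n + kap.-1)%N, (cell_A i), (cell_c i).
by split; [exact: cell_A_neq0 | exact: cell_polyhedron].
Qed.

Lemma cells_affine_rep : affine_rep f alpha beta cell.
Proof.
split; last split.
- split; first exact: cell_in_P.
  split=> [|i j]; first exact: supp_cover_cells.
  by split; [|rewrite setIC]; exact: cell_face.
- by move=> i x [Sx <-]; rewrite lnK_supp.
- by move=> i j; apply: contraNneq => /alpha_inj ->.
Qed.

Section OtherRepresentation.
Variables (m : nat) (alpha' : 'I_m -> V) (beta' : 'I_m -> R) (E' : 'I_m -> set V).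
Hypothesis rep' : affine_rep f alpha' beta' E'.

Lemma rep_piece_closed l : closed (E' l).
Proof. by have [[/(_ l) [[n' [A' [c' [_ ->]]]] _] _] _] := rep'; exact: polyhedron_closed. Qed.

Lemma rep_piece_ln l x : E' l x -> ln (f x) = dot (alpha' l) x + beta' l.
Proof. by have [_ [E'f _]] := rep'; move=> /E'f ->; rewrite expRK. Qed.

Lemma rep_cover : supp f = \bigcup_(l in setT) E' l.
Proof. by have [[_ []]] := rep'. Qed.

Lemma rep_slopes_neq l l' : l != l' -> alpha' l != alpha' l'.
Proof. by have [_ [_]] := rep'; apply. Qed.

Lemma rep_matches_cell i : exists l, alpha' l = alpha i /\ beta' l = beta i.
Proof.
have cover : (cell i)° `<=` \bigcup_l E' l.
  by move=> x /interior_subset /cell_supp; rewrite rep_cover.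
have ln_f : forall x, (cell i)° x -> ln (f x) = dot (alpha i) x + beta i.
  by move=> x /interior_subset [].
have [l [al bl _]] := affine_cover_match rep_piece_closed rep_piece_ln
  (@open_interior _ (cell i)) (cell_interior i) cover ln_f.
by exists l.
Qed.

Lemma cell_matches_rep l : exists i, alpha i = alpha' l /\ beta i = beta' l.
Proof.
have [[/(_ l) [_ E'l_int] _] _] := rep'.
have cover : (E' l)° `<=` \bigcup_i cell i.
  by move=> x /interior_subset E'x; rewrite -supp_cover_cells rep_cover; exists l.
have ln_f : forall x, (E' l)° x -> ln (f x) = dot (alpha' l) x + beta' l.
  by move=> x /interior_subset /rep_piece_ln.
have [i [ai bi _]] := affine_cover_match cell_closed (fun i x (cix : cell i x) => cix.2)
  (@open_interior _ (E' l)) E'l_int cover ln_f.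
by exists i.
Qed.

(* An interior point of [cell i] outside [E' l] would lie, by Baire, in the interior of
   another piece carrying the same affine function, against distinctness of the slopes. *)
Lemma rep_piece_cell l i : alpha' l = alpha i -> beta' l = beta i -> E' l = cell i.
Proof.
move=> al bl; apply/seteqP; split=> [x E'x|].
  by split; [rewrite rep_cover; exists l | rewrite (rep_piece_ln E'x) al bl].
have int_sub : (cell i)° `<=` E' l.
  move=> z zi; apply: contrapT => nE'z.
  have cover : (cell i)° `&` ~` E' l `<=` \bigcup_l E' l.
    by move=> x [/interior_subset /cell_supp]; rewrite rep_cover.
  have ln_f : forall x, ((cell i)° `&` ~` E' l) x -> ln (f x) = dot (alpha i) x + beta i.
    by move=> x [/interior_subset []].
  have W_open : open ((cell i)° `&` ~` E' l).
    by apply: openI; [exact: open_interior | exact/closed_openC/rep_piece_closed].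
  have [l' [al' _ [y [[_ nE'y] E'y]]]] := affine_cover_match rep_piece_closed rep_piece_ln
    W_open (ex_intro _ z (conj zi nE'z)) cover ln_f.
  have l'l : l' = l by apply/eqP; apply: contraT => /rep_slopes_neq; rewrite al' al eqxx.
  by apply: nE'y; rewrite -l'l.
move=> x /(convex_sub_closure_interior (cell_convex (i:=i)) (cell_interior i)).
by move=> /(closureS int_sub); rewrite -(closure_id _).1 //; exact: rep_piece_closed.
Qed.

Lemma cells_unique : exists h : 'I_kap -> 'I_m, bijective h /\
  forall i, alpha' (h i) = alpha i /\ beta' (h i) = beta i /\ E' (h i) = cell i.
Proof.
have [h hE] := choice rep_matches_cell; have [g gE] := choice cell_matches_rep.
have hK : cancel h g by move=> i; apply: alpha_inj; rewrite (gE _).1 (hE _).1.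
have gK : cancel g h.
  by move=> l; apply/eqP; apply: contraT => /rep_slopes_neq; rewrite (hE _).1 (gE _).1 eqxx.
exists h; split; first by exists g.
by move=> i; have [al bl] := hE i; do !split => //; exact: rep_piece_cell.
Qed.

End OtherRepresentation.

(* A facet of [cell i] lies in a facet of [supp f] or in one of the [kap - 1]
   hyperplanes where the affine function of [cell i] meets another one. *)
Lemma cell_facets m : in_Pm m (supp f) -> forall i, in_Pm (m + kap.-1) (cell i).
Proof.
move=> [_ [Fs Fs_facets]] i; split; first exact: cell_in_P.
exists (fun t => cell i `&` match fintype.split t with
  | inl s => Fs s
  | inr j => [set x | dot (alpha i - alpha (lift i j)) x = beta (lift i j) - beta i] end).
have cell_int : (polyhedron (cell_A i) (cell_c i))° !=set0.
  by rewrite -cell_polyhedron; exact: cell_interior.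
move=> F; rewrite {1}cell_polyhedron => /(polyhedron_facet (@cell_A_neq0 i) cell_int).
move=> [r [FE [d0 Fdim]]]; rewrite -cell_polyhedron /cell_A /cell_c in FE.
case: (fintype.split r) FE => [s|j] FE; last by exists (unsplit (inr j)); rewrite unsplitK.
pose G := supp f `&` [set x | dot (A s) x = c s].
have GF : is_facet (supp f) G.
  rewrite /G suppE; apply: polyhedron_constraint_facet; rewrite -?suppE //.
  by apply: has_aff_indep_sub Fdim; rewrite FE => x [/cell_supp].
have [t Gt] := Fs_facets G GF.
exists (unsplit (inl t)); rewrite unsplitK -Gt FE /G.
by apply/seteqP; split=> x [cix xs]; split=> //; [split=> //; exact: cell_supp cix | case: xs].
Qed.

End LogConcave.

Theorem proposition1 (R : realType) (d k : nat) (f : 'rV[R]_d -> R) :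
  in_G f -> log_k_affine k f -> in_P (supp f) ->
  exists (kap : nat) (alpha : 'I_kap -> 'rV[R]_d) (beta : 'I_kap -> R)
         (E : 'I_kap -> set 'rV[R]_d),
    (kap <= k)%N /\ affine_rep f alpha beta E /\
    (forall (kap' : nat) (alpha' : 'I_kap' -> 'rV[R]_d) (beta' : 'I_kap' -> R)
            (E' : 'I_kap' -> set 'rV[R]_d),
        affine_rep f alpha' beta' E' ->
        exists h : 'I_kap -> 'I_kap', bijective h /\
          forall j, alpha' (h j) = alpha j /\ beta' (h j) = beta j /\ E' (h j) = E j) /\
    (forall m : nat, in_Pm m (supp f) -> forall j, in_Pm (k + m).-1 (E j)).
Proof.
move=> [phi [phi_noo [phi_usc [phi_concave f_expphi]]]] [E0 [E0_closed [E0_cover E0_affine]]]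
  [[n [A [c [A_neq0 suppE]]]] supp_int].
have /choice [ab ab_affine] : forall j, exists ab : 'rV[R]_d * R,
    forall x, E0 j x -> ln (f x) = dot ab.1 x + ab.2.
  by move=> j; have [a [b ?]] := E0_affine j; exists (a, b).
have rep := cells_affine_rep phi_noo phi_usc phi_concave f_expphi A_neq0 suppE supp_int
  E0_closed E0_cover ab_affine.
have uniq := cells_unique phi_noo phi_usc phi_concave f_expphi suppE supp_int
  E0_closed E0_cover ab_affine.
have facets := cell_facets phi_noo phi_usc phi_concave f_expphi A_neq0 suppE supp_int
  E0_closed E0_cover ab_affine.
do 4!eexists; split; [|split; [exact: rep | split; [exact: uniq |]]].
- exact: kap_le.
- move=> m /facets Pm i; apply: in_Pm_le (Pm i).
  by have := kap_le f (fun j => (ab j).1) (fun j => (ab j).2); have := ltn_ord i; lia.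
Qed.
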